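(* Let $p$ be a prime, $\alpha_1,\dots,\alpha_n,\beta\ge1$, and let $f:\mathbb{Z}_{p^{\alpha_1}}\times\cdots\times\mathbb{Z}_{p^{\alpha_n}}\to\mathbb{Z}_{p^\beta}$ be any map. Put $d_j:=p^{\alpha_j}-1+(\beta-1)(p-1)p^{\alpha_j-1}$ and $[d]:=\{0,\dots,d_1\}\times\cdots\times\{0,\dots,d_n\}$. Then the polyfract $$P=\sum_{\delta\in[d]}P_\delta\prod_{j=1}^n\binom{X_j}{\delta_j},\qquad P_\delta:=\sum_{x\in\mathbb{Z}_{p^{\alpha_1}}\times\cdots\times\mathbb{Z}_{p^{\alpha_n}}}\binom{\delta_1}{\delta_1-x_1}_{p^{\alpha_1},p^\beta}\cdots\binom{\delta_n}{\delta_n-x_n}_{p^{\alpha_n},p^\beta}f(x),$$ is $(p^{\alpha_1},\dots,p^{\alpha_n})$-periodic and interpolates $f$: $P(x)=f(x)$ for all $x\in\mathbb{Z}_{p^{\alpha_1}}\times\cdots\times\mathbb{Z}_{p^{\alpha_n}}$.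
   Context: $\mathbb{Z}_r=\mathbb{Z}/r\mathbb{Z}$; $\binom{X}{\delta}=X(X-1)\cdots(X-\delta+1)/\delta!$, $\binom{X}{0}=1$. For integers $d\ge0$, $q\ge1$, $r\ge0$ and a residue class $x\in\mathbb{Z}_q$, the co-monofract value is $\binom{d}{x}_{q}:=\sum_{\hat x\in x,\ \hat x\ge0}(-1)^{\hat x}\binom{d}{\hat x}\in\mathbb{Z}$ (only $\hat x\le d$ contribute) and $\binom{d}{x}_{q,r}:=\binom{d}{x}_q+r\mathbb{Z}\in\mathbb{Z}_r$; here $\delta_j-x_j$ denotes the residue class $\delta_j+\mathbb{Z}_{p^{\alpha_j}}$-difference in $\mathbb{Z}_{p^{\alpha_j}}$. A polyfract $P$ is evaluated at $x\in\mathbb{Z}^n$ by $P(x)=\sum_\delta(\prod_j\binom{x_j}{\delta_j})P_\delta\in\mathbb{Z}_{p^\beta}$; being periodic, it induces a map on $\mathbb{Z}_{p^{\alpha_1}}\times\cdots\times\mathbb{Z}_{p^{\alpha_n}}$. *)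

From HB Require Import structures.
From mathcomp Require Import all_boot all_order all_algebra.
Set Implicit Arguments. Unset Strict Implicit. Unset Printing Implicit Defensive.
Import Order.TTheory GRing.Theory Num.Theory.
Local Open Scope ring_scope.

(* Integer binomial X(X-1)...(X-k+1)/k!  (exact division in int). *)
Definition binz (X : int) (k : nat) : int :=
  ((\prod_(i < k) (X - i%:Z)) %/ (k`!)%:Z)%Z.

(* co-monofract value  binom(d, c)_q := sum over hat x >= 0, hat x in c + qZ,
   of (-1)^(hat x) 'C(d, hat x); only hat x <= d contribute. *)
Definition comono (d q : nat) (c : int) : int :=
  \sum_(0 <= k < d.+1 | (k%:Z == c %[mod q%:Z])%Z) (-1) ^+ k * ('C(d, k))%:Z.

Definition dexp (p beta a : nat) : nat :=
  (p ^ a - 1 + (beta - 1) * (p - 1) * p ^ (a - 1))%N.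

(* The domain Z_{p^alpha_1} x ... x Z_{p^alpha_n}, elements given by their
   canonical representatives in {0, ..., p^alpha_j - 1}. *)
Definition dom (p n : nat) (alpha : 'I_n -> nat) :=
  {dffun forall j : 'I_n, 'I_(p ^ alpha j)}.

Definition idx (p beta n : nat) (alpha : 'I_n -> nat) :=
  {dffun forall j : 'I_n, 'I_(dexp p beta (alpha j)).+1}.

Definition coefP (p beta n : nat) (alpha : 'I_n -> nat)
    (f : dom p alpha -> 'Z_(p ^ beta)) (delta : 'I_n -> nat) : 'Z_(p ^ beta) :=
  \sum_(x : dom p alpha)
     (\prod_(j < n) (comono (delta j) (p ^ alpha j) ((delta j)%:Z - (x j : nat)%:Z))%:~R)
       * f x.

Definition evalP (p beta n : nat) (alpha : 'I_n -> nat)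
    (f : dom p alpha -> 'Z_(p ^ beta)) (y : 'I_n -> int) : 'Z_(p ^ beta) :=
  \sum_(delta : idx p beta alpha)
     (\prod_(j < n) binz (y j) (delta j))%:~R * coefP f (fun j => (delta j : nat)).

From HB Require Import structures.
From mathcomp Require Import all_boot all_order all_algebra ring zify.
Set Implicit Arguments. Unset Strict Implicit. Unset Printing Implicit Defensive.
Import Order.TTheory GRing.Theory Num.Theory.
Local Open Scope ring_scope.

(* Fix one coordinate, with modulus q = p^a and degree bound d = d_j.  The
   co-monofract comono t q r is the sum of the coefficients of (1 - X)^t in
   the residue class r mod q; it satisfies the Pascal-type recurrence
     comono (t+1) q (r+1) = comono t q (r+1) - comono t q r.
   A Newton forward-difference expansion then gives
     sum_(t <= d) binz y t * comono t q (t - x) = comono 0 q (y - x)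
   as soon as comono (d+1) q vanishes modulo p^beta.  That vanishing follows
   from a polynomial congruence: (1 - X)^(d+1) lies in the ideal generated by
   p^beta and 1 - X^q (a lifting-the-exponent style computation using
   Frobenius).  Since comono 0 q c is the indicator of c = 0 mod q, expanding
   the product over coordinates shows that P(y) = sum_x [y = x] f(x), where
   [y = x] tests congruence coordinatewise; periodicity and interpolation
   are then immediate. *)

Definition falling (y : int) (k : nat) : int := \prod_(i < k) (y - i%:Z).

Lemma fallingS (y : int) (k : nat) :
  falling (y + 1) k.+1 = falling y k.+1 + k.+1%:Z * falling y k.
Proof.
rewrite /falling big_ord_recl big_ord_recr /=.
have -> : \prod_(i < k) (y + 1 - (bump 0 i)%:Z) = \prod_(i < k) (y - i%:Z).
  by apply: eq_bigr => i _; rewrite /bump /= add1n -addn1 PoszD; ring.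
rewrite -[k.+1]addn1 PoszD; ring.
Qed.

Lemma falling0 (k : nat) : falling 0 k.+1 = 0.
Proof. by rewrite /falling big_ord_recl /= subrr mul0r. Qed.

Lemma fact_dvd_falling (k : nat) (y : int) : ((k`!)%:Z %| falling y k)%Z.
Proof.
elim: k y => [|k IH] y; first by rewrite /falling big_ord0 fact0 dvdz1.
have shift z : ((k.+1`!)%:Z %| falling (z + 1) k.+1)%Z
             = ((k.+1`!)%:Z %| falling z k.+1)%Z.
  by rewrite fallingS rpredDr // factS PoszM dvdz_mul.
elim/int_rec: y => [|m IHm|m IHm]; first by rewrite falling0 dvdz0.
  by rewrite -addn1 PoszD shift.
by rewrite -shift -addn1 PoszD opprD addrNK.
Qed.

Lemma binz0 (y : int) : binz y 0 = 1.
Proof. by rewrite /binz big_ord0 fact0 divz1. Qed.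

Lemma binz0n (k : nat) : binz 0 k = (k == 0)%:R.
Proof.
case: k => [|k]; first by rewrite binz0.
by have := falling0 k; rewrite /falling /binz => ->; rewrite div0z.
Qed.

Lemma binz_pascal (y : int) (k : nat) :
  binz (y + 1) k.+1 = binz y k.+1 + binz y k.
Proof.
rewrite /binz -!/(falling _ _) fallingS.
have /dvdzP [a ->] := fact_dvd_falling k y.
have /dvdzP [b ->] := fact_dvd_falling k.+1 y.
have fact_neq0 m : (m`!)%:Z != 0 by rewrite eqz_nat -lt0n fact_gt0.
rewrite factS PoszM.
have -> : b * (k.+1%:Z * (k`!)%:Z) + k.+1%:Z * (a * (k`!)%:Z)
        = (b + a) * (k.+1%:Z * (k`!)%:Z) by ring.
by rewrite !mulzK // mulf_neq0.
Qed.

(* A family A e r of ring elements whose e-th member is the e-th backward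
   difference of A 0 and whose (d+1)-th member vanishes: then A 0 is
   recovered from the values A e (e + s) through the integer binomials. *)
Section NewtonExpansion.
Variables (R : pzRingType) (d : nat) (A : nat -> int -> R).
Hypothesis A_diff : forall e r, A e.+1 (r + 1) = A e (r + 1) - A e r.
Hypothesis A_top : forall r, A d.+1 r = 0.

Definition newton_sum (s y : int) : R :=
  \sum_(e < d.+1) (binz y e)%:~R * A e (e%:Z + s).

Lemma newton_sum_shift (s y : int) : newton_sum (s + 1) y = newton_sum s (y + 1).
Proof.
have split_diff : newton_sum (s + 1) y
    = newton_sum s y + \sum_(e < d.+1) (binz y e)%:~R * A e.+1 (e.+1%:Z + s).
  rewrite /newton_sum -big_split /=; apply: eq_bigr => e _.
  have -> : e.+1%:Z + s = (e%:Z + s) + 1 by rewrite -addn1 PoszD; ring.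
  by rewrite A_diff mulrBr addrC subrK addrA.
rewrite split_diff /newton_sum big_ord_recl [in RHS]big_ord_recl /= binz0 !add0r.
under [in RHS]eq_bigr => i _ do rewrite /bump /= add1n binz_pascal rmorphD mulrDl.
rewrite big_split /= addrA; congr (_ + _).
  by rewrite binz0; congr (_ + _); apply: eq_bigr => i _; rewrite /bump /= add1n.
by rewrite big_ord_recr /= A_top mulr0 addr0.
Qed.

Lemma newton_sum_at0 (s : int) : newton_sum s 0 = A 0 s.
Proof.
rewrite /newton_sum big_ord_recl /= binz0n /= add0r mul1r big1 ?addr0 // => i _.
by rewrite binz0n /= mul0r.
Qed.

Lemma newton_expansion (s y : int) : newton_sum s y = A 0 (s + y).
Proof.
elim/int_rec: y s => [|m IHm|m IHm] s; first by rewrite newton_sum_at0 addr0.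
  by rewrite -addn1 PoszD -newton_sum_shift IHm; congr (A 0 _); ring.
have -> : s = (s - 1) + 1 by ring.
rewrite newton_sum_shift.
have -> : - (m.+1)%:Z + 1 = - m%:Z by rewrite -addn1 PoszD; ring.
by rewrite IHm; congr (A 0 _); rewrite -addn1 PoszD; ring.
Qed.
End NewtonExpansion.

(* This map kills multiples of 1 - X^q, which is what makes ideal
   membership modulo (k, 1 - X^q) visible on co-monofracts. *)
Section ResidueSum.
Variable q : nat.

Definition residue_sum (N : nat) (P : {poly int}) (r : int) : int :=
  \sum_(0 <= i < N | (i%:Z == r %[mod q%:Z])%Z) P`_i.

Lemma residue_sum_widen (N M : nat) (P : {poly int}) (r : int) :
  (size P <= N)%N -> (N <= M)%N -> residue_sum N P r = residue_sum M P r.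
Proof.
move=> sP NM; rewrite /residue_sum (big_cat_nat (leq0n N) NM) /=.
rewrite [X in _ + X]big_nat_cond [X in _ + X]big1 ?addr0 // => i /andP [/andP [Hi _] _].
by rewrite nth_default // (leq_trans sP Hi).
Qed.

Lemma residue_sumD (N : nat) (P Q : {poly int}) (r : int) :
  residue_sum N (P + Q) r = residue_sum N P r + residue_sum N Q r.
Proof. by rewrite /residue_sum -big_split; apply: eq_bigr => i _; rewrite coefD. Qed.

Lemma residue_sumN (N : nat) (P : {poly int}) (r : int) :
  residue_sum N (- P) r = - residue_sum N P r.
Proof. by rewrite /residue_sum -sumrN; apply: eq_bigr => i _; rewrite coefN. Qed.

Lemma residue_sumMn (N : nat) (P : {poly int}) (k : nat) (r : int) :
  residue_sum N (P *+ k) r = residue_sum N P r *+ k.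
Proof. by rewrite /residue_sum -sumrMnl; apply: eq_bigr => i _; rewrite coefMn. Qed.

Lemma residue_sum_shift (N n : nat) (P : {poly int}) (r : int) : (n <= N)%N ->
  residue_sum N ('X^n * P) (r + n%:Z) = residue_sum (N - n) P r.
Proof.
move=> nN; rewrite /residue_sum (big_cat_nat (leq0n n) nN) /=.
rewrite [X in X + _]big_nat_cond [X in X + _]big1 ?add0r; last first.
  by move=> i /andP [/andP [_ Hi] _]; rewrite coefXnM Hi.
rewrite -{1}(add0n n) big_addn; apply: eq_big => [i|i _].
  by rewrite PoszD eqz_modDr.
by rewrite coefXnM ltnNge leq_addl /= addnK.
Qed.

Lemma residue_sum_periodic (N : nat) (P : {poly int}) (r : int) :
  residue_sum N P (r + q%:Z) = residue_sum N P r.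
Proof. by rewrite /residue_sum; apply: eq_bigl => i; rewrite modzDr. Qed.
End ResidueSum.

Lemma coef_one_subX_exp (d k : nat) :
  ((1 - 'X : {poly int}) ^+ d)`_k = (-1) ^+ k * ('C(d, k))%:Z.
Proof.
elim: d k => [|d IH] k.
  by rewrite expr0 coef1; case: k => [|k] //=; rewrite bin0n /= mulr0.
rewrite exprSr mulrBr mulr1 coefB coefMX.
case: k => [|k] /=; first by rewrite IH subr0 !bin0 expr0.
rewrite !IH binS PoszD exprS; ring.
Qed.

Lemma size_one_subX_exp (d : nat) : size ((1 - 'X : {poly int}) ^+ d) = d.+1.
Proof.
have -> : (1 - 'X : {poly int}) = (-1) * ('X - 1%:P) by rewrite polyC1; ring.
by rewrite exprMn size_Msign size_exp_XsubC.
Qed.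

Lemma comonoE (d q : nat) (r : int) :
  comono d q r = residue_sum q d.+1 ((1 - 'X) ^+ d) r.
Proof.
by rewrite /comono /residue_sum; apply: eq_bigr => k _; rewrite coef_one_subX_exp.
Qed.

(* From (1 - X)^(d+1) = (1 - X)^d - X (1 - X)^d. *)
Lemma comono_diff (d q : nat) (r : int) :
  comono d.+1 q (r + 1) = comono d q (r + 1) - comono d q r.
Proof.
rewrite !comonoE exprS mulrBl mul1r residue_sumD residue_sumN.
rewrite -(@residue_sum_widen q d.+1 d.+2 ((1 - 'X) ^+ d) (r + 1)) ?size_one_subX_exp //.
by rewrite (@residue_sum_shift q d.+2 1 _ r).
Qed.

Lemma comono0_sub (q : nat) (y x : int) :
  comono 0 q (y - x) = (y == x %[mod q%:Z])%Z%:R.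
Proof.
rewrite /comono big_mkcond big_nat1 /= expr0 mul1r bin0.
by rewrite -(eqz_modDr x) add0r subrK eq_sym; case: ifP.
Qed.

Lemma dvd_comono (q k d : nat) (b c : {poly int}) (r : int) :
  (1 - 'X) ^+ d = k%:R * b + (1 - 'X^q) * c -> (k%:Z %| comono d q r)%Z.
Proof.
move=> decomp.
set N := (d.+1 + size b + (size c + q))%N.
have -> : comono d q r = residue_sum q N ((1 - 'X) ^+ d) r.
  by rewrite comonoE (@residue_sum_widen q d.+1 N) ?size_one_subX_exp // /N -addnA leq_addr.
rewrite decomp residue_sumD mulr_natl residue_sumMn mulrBl mul1r residue_sumD residue_sumN.
have qN : (q <= N)%N by rewrite /N addnA leq_addl.
rewrite -[r](subrK q%:Z) residue_sum_shift // !residue_sum_periodic.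
rewrite -(@residue_sum_widen q (N - q)%N N c) ?leq_subr //; last first.
  by rewrite /N addnA addnK leq_addl.
by rewrite subrr addr0 -mulr_natr natz dvdz_mull.
Qed.

Section FrobeniusCongruence.
Variables (R : comPzRingType) (p : nat).
Hypothesis p_prime : prime p.
Local Notation P := (p%:R : R).

Lemma frobenius_add (a b : R) : exists w, (a + b) ^+ p = a ^+ p + b ^+ p + P * w.
Proof.
have [m pm] : exists m, p = m.+2 by case: (p) p_prime => [|[|m]] //; exists m.
exists (\sum_(i < m.+1) (a ^+ (m.+2 - i.+1) * b ^+ i.+1) *+ ('C(m.+2, i.+1) %/ m.+2)).
rewrite pm exprDn big_ord_recr big_ord_recl /= subnn subn0 !bin0 binn !expr0 mulr1 mul1r.
rewrite big_distrr /=.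
have -> : \sum_(i < m.+1) (a ^+ (m.+2 - bump 0 i) * b ^+ bump 0 i) *+ 'C(m.+2, bump 0 i)
  = \sum_(i < m.+1) m.+2%:R * ((a ^+ (m.+2 - i.+1) * b ^+ i.+1) *+ ('C(m.+2, i.+1) %/ m.+2)).
  apply: eq_bigr => i _; rewrite /bump /= add1n mulr_natl -mulrnA divnK //.
  by rewrite -pm prime_dvd_bin // pm /= ltnS ltn_ord.
rewrite !mulr1n; ring.
Qed.

Lemma frobenius_one_sub (y : R) : exists w, (1 - y) ^+ p = 1 - y ^+ p + P * w.
Proof.
have [w Hw] := frobenius_add (1 - y) y; rewrite subrK expr1n in Hw.
by exists (-w); rewrite -[LHS](addrK (y ^+ p + P * w)) addrA -Hw; ring.
Qed.

Lemma frobenius_one_sub_iter (e : nat) (y : R) :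
  exists w, (1 - y) ^+ (p ^ e) = 1 - y ^+ (p ^ e) + P * w.
Proof.
elim: e => [|e [w Hw]]; first by exists 0; rewrite expn0 !expr1; ring.
have [w1 E1] := frobenius_add (1 - y ^+ (p ^ e)) (P * w).
have [w2 E2] := frobenius_one_sub (y ^+ (p ^ e)).
have Pp : P ^+ p = P * P ^+ p.-1 by rewrite -exprS prednK // prime_gt0.
exists (w2 + P ^+ p.-1 * w ^+ p + w1).
by rewrite expnSr !exprM Hw E1 E2 exprMn Pp; ring.
Qed.

Lemma expr_add_pmul (n : nat) (a b : R) : exists c, (a + P * b) ^+ n = a ^+ n + P * c.
Proof.
elim: n => [|n [c Hc]]; first by exists 0; rewrite !expr0; ring.
by exists (b * (a ^+ n + P * c) + a * c); rewrite !exprS Hc; ring.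
Qed.

Lemma sign_binom_pred_prime (k i : nat) : p = k.+1 -> (i < p)%N ->
  (p%:Z %| (-1) ^+ i * ('C(k, i))%:Z - 1)%Z.
Proof.
move=> pk; elim: i => [|i IH] lt; first by rewrite bin0 expr0 mul1r subrr dvdz0.
have -> : (-1) ^+ i.+1 * ('C(k, i.+1))%:Z - 1
   = (-1) ^+ i.+1 * ('C(k.+1, i.+1))%:Z + ((-1) ^+ i * ('C(k, i))%:Z - 1).
  by rewrite binS PoszD exprS; ring.
by rewrite rpredD ?IH ?(ltnW lt) // dvdz_mull // dvdzE /= -pk prime_dvd_bin.
Qed.

Lemma one_sub_expr_pred_prime (k : nat) (Y : R) : p = k.+1 ->
  exists K, (1 - Y) ^+ k = \sum_(i < p) Y ^+ i + P * K.
Proof.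
move=> pk.
exists (\sum_(i < k.+1) ((((-1) ^+ i * ('C(k, i))%:Z - 1) %/ p%:Z)%Z)%:~R * Y ^+ i).
have -> : \sum_(i < p) Y ^+ i = \sum_(i < k.+1) Y ^+ i by rewrite pk.
rewrite addrC exprD1n big_distrr -big_split /=; apply: eq_bigr => i _.
have i_lt_p : (i < p)%N by rewrite pk ltn_ord.
have /divzK quot := sign_binom_pred_prime pk i_lt_p.
set m := ((_ - 1) %/ _)%Z in quot *.
have coef : ((-1) ^+ i * ('C(k, i))%:R : R) = 1 + P * m%:~R.
  have := congr1 (fun z : int => (z%:~R : R)) quot.
  rewrite /= !(intrM, intrD, intrN, intr_sign) => h.
  have -> : ((-1) ^+ i * ('C(k, i))%:R : R) = m%:~R * p%:R + 1.
    by rewrite -[(p%:R : R)]/(p%:~R) h subrK.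
  by ring.
rewrite exprNn -mulr_natr.
transitivity (((-1) ^+ i * ('C(k, i))%:R) * Y ^+ i); first by ring.
by rewrite coef; ring.
Qed.

Variables (e : nat) (x : R).
Local Notation Y := (x ^+ (p ^ e)).
Local Notation v := (1 - Y).
Local Notation Phi := (\sum_(i < p) Y ^+ i).
Local Notation u := (1 - x).
Local Notation q := (p ^ e.+1)%N.
Local Notation phi := (p.-1 * p ^ e)%N.

Lemma v_mul_Phi : v * Phi = 1 - x ^+ q.
Proof.
have := subrX1 Y p; rewrite -exprM -expnSr => geom.
transitivity (- ((Y - 1) * Phi)); first by ring.
by rewrite -geom; ring.
Qed.

Definition in_ideal (k : nat) (a : R) := exists b c, a = P ^+ k * b + v * Phi * c.

Lemma u_exp_pe : exists H, u ^+ (p ^ e) = v + P * H.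
Proof. exact: frobenius_one_sub_iter. Qed.

Lemma u_exp_phi : exists G, u ^+ phi = Phi + P * G.
Proof.
have [H EH] := u_exp_pe.
have pk : p = p.-1.+1 by rewrite prednK // prime_gt0.
have [K EK] := one_sub_expr_pred_prime Y pk.
have [c Ec] := expr_add_pmul p.-1 v H.
by exists (K + c); rewrite mulnC exprM EH Ec EK; ring.
Qed.

(* Phi^2 = p Phi modulo v Phi, since Y^i = 1 modulo v. *)
Lemma Phi_sqr : exists M, Phi * Phi = P * Phi + v * Phi * M.
Proof.
exists (- \sum_(i < p) \sum_(j < i) Y ^+ j).
rewrite big_distrr /=.
rewrite (eq_bigr (fun i : 'I_p => Phi + v * Phi * - (\sum_(j < i) Y ^+ j))); last first.
  move=> i _; have geom := subrX1 Y i.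
  transitivity (Phi + Phi * (Y ^+ i - 1)); first by ring.
  by rewrite geom; ring.
rewrite big_split /= sumr_const card_ord -mulr_natl -big_distrr /=.
by rewrite sumrN mulr1 mulr_natl.
Qed.

Lemma q_split : q = (p ^ e + phi)%N.
Proof. by rewrite expnS -{1}(prednK (prime_gt0 p_prime)) mulSn. Qed.

(* Each further factor u^phi = Phi mod p gains one power of p; the extra
   factor Phi is tracked since Phi^2 = p Phi. *)
Lemma u_exp_in_ideal (m : nat) :
  in_ideal m.+1 (u ^+ (q + m * phi)) /\ in_ideal m.+2 (u ^+ (q + m * phi) * Phi).
Proof.
have [H EH] := u_exp_pe; have [G EG] := u_exp_phi; have [M EM] := Phi_sqr.
elim: m => [|m [[b1 [c1 Ha]] [b2 [c2 Hb]]]].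
  rewrite mul0n addn0 q_split exprD EH EG; split.
    by exists (H * Phi + v * G + P * H * G), 1; ring.
  exists (H * Phi + H * G * Phi), (P + v * M + P * G + P * H * M).
  transitivity ((v + P * H) * (Phi * Phi + P * G * Phi)); first by ring.
  by rewrite EM; ring.
set a := u ^+ (q + m * phi) in Ha Hb *.
have -> : u ^+ (q + m.+1 * phi) = a * (Phi + P * G).
  by rewrite mulSn addnCA exprD EG mulrC.
split.
  exists (b2 + G * b1), (c2 + P * G * c1).
  transitivity (a * Phi + P * G * a); first by ring.
  by rewrite Hb Ha !exprS; ring.
exists ((1 + G) * b2), (P * (1 + G) * c2 + M * a).
transitivity (a * (Phi * Phi + P * G * Phi)); first by ring.
rewrite EM.
transitivity (P * (1 + G) * (a * Phi) + v * Phi * (M * a)); first by ring.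
by rewrite Hb !exprS; ring.
Qed.

Lemma one_sub_exp_congr (m D : nat) : (q + m * phi <= D)%N ->
  exists b c, u ^+ D = P ^+ m.+1 * b + (1 - x ^+ q) * c.
Proof.
move=> le; have [[b [c E]] _] := u_exp_in_ideal m.
exists (b * u ^+ (D - (q + m * phi))), (c * u ^+ (D - (q + m * phi))).
by rewrite -{1}(subnKC le) exprD E -v_mul_Phi; ring.
Qed.
End FrobeniusCongruence.

Lemma dvdz_Zp0 (m : nat) (z : int) : (1 < m)%N -> (m%:Z %| z)%Z -> (z%:~R : 'Z_m) = 0.
Proof.
move=> m_gt1 /dvdzP [w ->]; rewrite intrM.
by have -> : ((m%:Z)%:~R : 'Z_m) = m%:R by []; rewrite pchar_Zp // mulr0.
Qed.

(* p^beta > 1, so that Z_(p^beta) really is Z/p^beta Z. *)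
Lemma prime_exp_gt1 (p beta : nat) : prime p -> (1 <= beta)%N -> (1 < p ^ beta)%N.
Proof.
move=> p_prime beta_ge1; apply: (leq_trans (prime_gt1 p_prime)).
by rewrite -{1}(expn1 p) leq_pexp2l // prime_gt0.
Qed.

Lemma comono_dexp_vanish (p beta a : nat) (r : int) :
  prime p -> (1 <= a)%N -> (1 <= beta)%N ->
  ((comono (dexp p beta a).+1 (p ^ a) r)%:~R : 'Z_(p ^ beta)) = 0.
Proof.
move=> p_prime a_ge1 beta_ge1.
have [e ->] : exists e, a = e.+1 by case: (a) a_ge1 => // e _; exists e.
apply: dvdz_Zp0; first exact: prime_exp_gt1.
have le : (p ^ e.+1 + beta.-1 * (p.-1 * p ^ e) <= (dexp p beta e.+1).+1)%N.
  have : (0 < p ^ e.+1)%N by rewrite expn_gt0 prime_gt0.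
  rewrite /dexp !subn1 /= mulnA; lia.
have [b [c decomp]] := one_sub_exp_congr p_prime ('X : {poly int}) le.
rewrite prednK // -natrX in decomp.
exact: dvd_comono decomp.
Qed.

(* The one-dimensional interpolation identity, by the Newton expansion
   applied to A t r = comono t (p^a) r in Z_(p^beta). *)
Lemma binz_comono_sum (p beta a : nat) (y x : int) :
  prime p -> (1 <= a)%N -> (1 <= beta)%N ->
  \sum_(t < (dexp p beta a).+1)
     (binz y t)%:~R * ((comono t (p ^ a) (t%:Z - x))%:~R : 'Z_(p ^ beta))
  = (comono 0 (p ^ a) (y - x))%:~R.
Proof.
move=> p_prime a_ge1 beta_ge1.
have diff t r : ((comono t.+1 (p ^ a) (r + 1))%:~R : 'Z_(p ^ beta))
   = (comono t (p ^ a) (r + 1))%:~R - (comono t (p ^ a) r)%:~R.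
  by rewrite comono_diff intrD intrN.
have := newton_expansion diff (fun r => comono_dexp_vanish r p_prime a_ge1 beta_ge1) (- x) y.
by rewrite /newton_sum addrC.
Qed.

Lemma bigA_dffun (R : comRingType) (I : finType) (T_ : I -> finType)
   (F : forall i, {ffun T_ i -> R}) :
  \sum_(f : {dffun forall i, T_ i}) \prod_i F i (f i) = \prod_i \sum_(t : T_ i) F i t.
Proof.
rewrite (reindex (@dffun_of_fprod I T_)) /=; last exact/onW_bij/dffun_of_fprod_bij.
under eq_bigr do under eq_bigr do rewrite ffunE.
rewrite (big_fprod _ _ F).
under [RHS]eq_bigr do rewrite (big_tag (fun i t => F i t)).
by rewrite bigA_distr_big_dep.
Qed.

Lemma evalP_indicator (p n beta : nat) (alpha : 'I_n -> nat)
    (f : dom p alpha -> 'Z_(p ^ beta)) (y : 'I_n -> int) :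
  prime p -> (forall j, (1 <= alpha j)%N) -> (1 <= beta)%N ->
  evalP f y = \sum_(x : dom p alpha)
     (\prod_(j < n) ((comono 0 (p ^ alpha j) (y j - (x j : nat)%:Z))%:~R
                     : 'Z_(p ^ beta))) * f x.
Proof.
move=> p_prime alpha_ge1 beta_ge1; rewrite /evalP /coefP.
under eq_bigr do rewrite big_distrr.
rewrite exchange_big /=; apply: eq_bigr => x _.
under eq_bigr do rewrite mulrA.
rewrite -big_distrl /=; congr (_ * _).
pose F j := [ffun t : 'I_(dexp p beta (alpha j)).+1 =>
   ((binz (y j) t)%:~R * (comono t (p ^ alpha j) (t%:Z - (x j : nat)%:Z))%:~R
    : 'Z_(p ^ beta))].
transitivity (\sum_(delta : idx p beta alpha) \prod_(j < n) F j (delta j)).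
  apply: eq_bigr => delta _; rewrite !rmorph_prod -big_split /=.
  by apply: eq_bigr => j _; rewrite ffunE.
rewrite bigA_dffun; apply: eq_bigr => j _.
under eq_bigr do rewrite ffunE.
exact: binz_comono_sum.
Qed.

Lemma residue_eq_small (q a b : nat) : (a < q)%N -> (b < q)%N ->
  (a%:Z == b%:Z %[mod q%:Z])%Z = (a == b).
Proof. by move=> aq bq; rewrite !modz_nat eqz_nat !modn_small. Qed.

Theorem theorem3p8 (p n beta : nat) (alpha : 'I_n -> nat)
    (f : dom p alpha -> 'Z_(p ^ beta)) :
  prime p -> (forall j, (1 <= alpha j)%N) -> (1 <= beta)%N ->
  (forall (y : 'I_n -> int) (k : 'I_n),
      evalP f (fun j => if j == k then y j + (p ^ alpha k)%:Z else y j) = evalP f y)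
  /\ (forall x : dom p alpha, evalP f (fun j => (x j : nat)%:Z) = f x).
Proof.
move=> p_prime alpha_ge1 beta_ge1; split.
  move=> y k; rewrite !evalP_indicator //; apply: eq_bigr => x _; congr (_ * _).
  apply: eq_bigr => j _; rewrite !comono0_sub.
  by case: (j =P k) => [->|//]; rewrite modzDr.
move=> x; rewrite evalP_indicator // (bigD1 x) //= [X in _ + X]big1 ?addr0.
  by rewrite big1 ?mul1r // => j _; rewrite comono0_sub eqxx.
move=> x' x'_neq_x.
have [j x_neq_x'] : exists j, (x j : nat) != x' j.
  apply/existsP; rewrite -negb_forall; apply: contra x'_neq_x => /forallP eq_xx'.
  by apply/eqP/ffunP => i; apply/esym/val_inj/eqP/eq_xx'.
by rewrite (bigD1 j) //= comono0_sub residue_eq_small // (negbTE x_neq_x') !mul0r.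
Qed.
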